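(* Let $X_1,\dots,X_n$ be i.i.d. from $P$ and $\mathcal{S}_n=\{X_1,\dots,X_n\}$. Assume $\rho>0$ and that there exist $t_0>0$ and $C_2<\infty$ such that the function $t\mapsto\rho(t)$ (with $\rho(0):=\rho$) is differentiable on $[0,t_0]$ with $|\rho'(t)|\le C_2$ there. Then for all $n\ge1$ and all $0<t<\min\{\rho/(2C_2),\,t_0\}$, $$\mathbb{P}\big(H(\mathcal{S}_n,\mathbb{M})>t\big)\;\le\;\frac{2^{d+1}}{\rho\,t^d}\exp\Big(-\frac{n\rho\,t^d}{2}\Big).$$
   Context: $\mathbb{M}\subset\mathbb{R}^D$ is a compact $d$-dimensional smooth submanifold with positive reach and $P$ is a probability distribution with support $\mathbb{M}$. $B(x,r)$ is the closed Euclidean ball of radius $r$ about $x$. The Hausdorff distance between sets $A,B\subset\mathbb{R}^D$ is $H(A,B)=\max\{\sup_{a\in A}\inf_{b\in B}\|a-b\|,\ \sup_{b\in B}\inf_{a\in A}\|a-b\|\}$. For $x\in\mathbb{M}$ and $t>0$ define $\rho(x,t)=P(B(x,t/2))/t^d$, $\rho(t)=\inf_{x\in\mathbb{M}}\rho(x,t)$, and $\rho=\lim_{t\downarrow0}\rho(t)$ (assumed to exist). *)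

From HB Require Import structures.
From mathcomp Require Import all_boot all_order all_algebra.
From mathcomp Require Import all_classical all_reals all_analysis.

Set Implicit Arguments.
Unset Strict Implicit.
Unset Printing Implicit Defensive.

Import Order.TTheory GRing.Theory Num.Theory.
Import numFieldNormedType.Exports.

Local Open Scope classical_set_scope.
Local Open Scope ring_scope.

Section Defs.
Variables (R : realType) (D : nat).

(* Points of R^D are row vectors; the topology on 'rV[R]_D is the product
   (= Euclidean) topology. *)
Definition eucl_norm (x : 'rV[R]_D) : R := Num.sqrt (\sum_(i < D) (x ord0 i) ^+ 2).

Definition eucl_ball (x : 'rV[R]_D) (r : R) : set 'rV[R]_D :=
  [set y | eucl_norm (y - x) <= r].

Definition borelD (A : set 'rV[R]_D) : Prop :=
  <<s [set U : set 'rV[R]_D | open U] >> A.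

(* Euclidean distance from a point to a set (in \bar R, +oo for the empty set) *)
Definition eucl_dist (x : 'rV[R]_D) (A : set 'rV[R]_D) : \bar R :=
  ereal_inf [set (eucl_norm (x - a))%:E | a in A].

Definition hausdorff_distance (A B : set 'rV[R]_D) : \bar R :=
  maxe (ereal_sup [set eucl_dist a B | a in A]) (ereal_sup [set eucl_dist b A | b in B]).

Definition prob_support (P : set 'rV[R]_D -> \bar R) : set 'rV[R]_D :=
  [set x | forall U, open U -> U x -> (0 < P U)%E].

(* positive reach (Federer): reach M = sup { r | every point at distance < r
   from M has a unique nearest_pt point in M }; positive reach <-> some r > 0
   has this property *)
Definition nearest_pt (M : set 'rV[R]_D) (x a : 'rV[R]_D) : Prop :=
  M a /\ (eucl_norm (x - a))%:E = eucl_dist x M.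

Definition positive_reach (M : set 'rV[R]_D) : Prop :=
  exists2 r : R, 0 < r &
    forall x, (eucl_dist x M < r%:E)%E ->
      forall a b, nearest_pt M x a -> nearest_pt M x b -> a = b.

Fixpoint iter_dir_deriv (vs : seq 'rV[R]_D) (f : 'rV[R]_D -> 'rV[R]_D) : 'rV[R]_D -> 'rV[R]_D :=
  match vs with
  | [::] => f
  | v :: vs' => fun x => 'D_v (iter_dir_deriv vs' f) x
  end.

(* f is C^oo on the open set U: all iterated (directional, hence partial)
   derivatives exist and are continuous on U *)
Definition smooth_on_open (U : set 'rV[R]_D) (f : 'rV[R]_D -> 'rV[R]_D) : Prop :=
  forall (vs : seq 'rV[R]_D) (x : 'rV[R]_D), U x ->
    {for x, continuous (iter_dir_deriv vs f)} /\
    forall v, derivable (iter_dir_deriv vs f) x v.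

Definition flat_part (d : nat) : set 'rV[R]_D :=
  [set y | forall i : 'I_D, (d <= i)%N -> y ord0 i = 0].

(* M is a d-dimensional C^oo embedded submanifold of R^D: locally
   diffeomorphic to R^d x {0} (submanifold charts) *)
Definition smooth_submanifold (d : nat) (M : set 'rV[R]_D) : Prop :=
  (d <= D)%N /\
  forall p, M p ->
    exists (U V : set 'rV[R]_D) (phi psi : 'rV[R]_D -> 'rV[R]_D),
      [/\ open U, U p, open V, smooth_on_open U phi & smooth_on_open V psi] /\
      [/\ phi @` U = V,
          (forall x, U x -> psi (phi x) = x),
          (forall y, V y -> phi (psi y) = y)
        & phi @` (U `&` M) = V `&` flat_part d].

End Defs.

From HB Require Import structures.
From mathcomp Require Import all_boot all_order all_algebra.
From mathcomp Require Import all_classical all_reals all_analysis.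
From mathcomp Require Import ring lra.

Set Implicit Arguments.
Unset Strict Implicit.
Unset Printing Implicit Defensive.

Import Order.TTheory GRing.Theory Num.Theory.
Import numFieldNormedType.Exports.
Local Open Scope classical_set_scope.
Local Open Scope ring_scope.

(* For 0 < s <= t the mean value theorem gives rho(s) >= rho - C2 s >= rho / 2,
   so every ball B(x, s/2) centred on M has P-mass at least (rho / 2) s^d.  A
   maximal t/2-separated family L of points of M has disjoint t/4-balls, hence
   at most 2^(d+1) / (rho t^d) elements, and its t/2-balls cover M.  Almost
   surely every X_i lies in M = supp P (the complement of M is a countable union
   of compact P-null sets), so H(S_n, M) > t forces some point of M to be at
   distance > t from the sample, and then some ball B(q, t/2), q in L, contains
   no X_i: an event of probability (1 - P B(q, t/2))^n <= exp(- n rho t^d / 2).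
   A union bound over L concludes; the event is measurable because M can be
   approximated by finite nets. *)

Lemma cauchy_schwarz_sum (R : realDomainType) (I : finType) (a b : I -> R) :
  (\sum_i a i * b i) ^+ 2 <= (\sum_i a i ^+ 2) * (\sum_i b i ^+ 2).
Proof.
pose SA := \sum_i a i ^+ 2; pose SB := \sum_i b i ^+ 2; pose SC := \sum_i a i * b i.
have lagrange : \sum_i \sum_j (a i * b j - a j * b i) ^+ 2 = 2 * (SA * SB - SC ^+ 2).
  have expand i j : (a i * b j - a j * b i) ^+ 2 =
      a i ^+ 2 * b j ^+ 2 + a j ^+ 2 * b i ^+ 2 - 2 * (a i * b i * (a j * b j)).
    by rewrite !expr2; ring.
  under eq_bigr => i _ do under eq_bigr => j _ do rewrite expand.
  under eq_bigr => i _ do rewrite sumrB big_split /=.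
  rewrite sumrB big_split /= [X in _ + X - _]exchange_big /=.
  have prodE : \sum_i \sum_j a i ^+ 2 * b j ^+ 2 = SA * SB.
    by rewrite mulr_suml; apply: eq_bigr => i _; rewrite mulr_sumr.
  have cross : \sum_i \sum_j 2 * (a i * b i * (a j * b j)) = 2 * (SC * SC).
    by rewrite /SC mulr_suml mulr_sumr; apply: eq_bigr => i _; rewrite !mulr_sumr.
  by rewrite prodE cross; ring.
have : 0 <= \sum_i \sum_j (a i * b j - a j * b i) ^+ 2.
  by apply: sumr_ge0 => i _; apply: sumr_ge0 => j _; exact: sqr_ge0.
by rewrite lagrange pmulr_rge0 // subr_ge0.
Qed.

Section EuclideanNorm.
Variables (R : realType) (D : nat).
Local Notation en := (@eucl_norm R D).
Implicit Types (x y z q : 'rV[R]_D) (r : R).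

Lemma eucl_norm_ge0 x : 0 <= en x.
Proof. exact: sqrtr_ge0. Qed.

Lemma eucl_norm_sqr x : en x ^+ 2 = \sum_i x ord0 i ^+ 2.
Proof. by rewrite sqr_sqrtr // sumr_ge0 // => i _; exact: sqr_ge0. Qed.

Lemma eucl_norm0 : en 0 = 0.
Proof. by rewrite /eucl_norm big1 ?sqrtr0 // => i _; rewrite mxE expr0n. Qed.

Lemma eucl_normN x : en (- x) = en x.
Proof. by congr Num.sqrt; apply: eq_bigr => i _; rewrite mxE sqrrN. Qed.

Lemma eucl_distC x y : en (x - y) = en (y - x).
Proof. by rewrite -eucl_normN opprB. Qed.

Lemma coord_le_eucl_norm x i : `|x ord0 i| <= en x.
Proof.
rewrite -sqrtr_sqr ler_wsqrtr // (bigD1 i) //= lerDl.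
by apply: sumr_ge0 => j _; exact: sqr_ge0.
Qed.

Lemma normr_le_eucl_norm x : `|x| <= en x.
Proof.
rewrite (_ : `|x| = mx_norm x) // mx_normrE.
apply: bigmax_le => [|[i j] _]; first exact: eucl_norm_ge0.
by rewrite /= (ord1 i); exact: coord_le_eucl_norm.
Qed.

Lemma ler_eucl_normD x y : en (x + y) <= en x + en y.
Proof.
have sum_ge0 : 0 <= en x + en y by rewrite addr_ge0 // eucl_norm_ge0.
rewrite -(ger0_norm sum_ge0) -sqrtr_sqr ler_wsqrtr // sqrrD !eucl_norm_sqr.
have -> : \sum_i (x + y) ord0 i ^+ 2 =
    \sum_i x ord0 i ^+ 2 + 2 * \sum_i x ord0 i * y ord0 i + \sum_i y ord0 i ^+ 2.
  by rewrite mulr_sumr -!big_split /=; apply: eq_bigr => i _; rewrite mxE; ring.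
rewrite -mulr_natl lerD2r lerD2l mulr1 -[leRHS]mulr_natl ler_pM2l //.
apply: le_trans (ler_norm _) _.
rewrite -sqrtr_sqr -[leRHS]ger0_norm ?mulr_ge0 ?eucl_norm_ge0 // -sqrtr_sqr.
by rewrite ler_wsqrtr // exprMn !eucl_norm_sqr; exact: cauchy_schwarz_sum.
Qed.

Lemma ler_eucl_dist_triangle x y z : en (x - z) <= en (x - y) + en (y - z).
Proof. by have := ler_eucl_normD (x - y) (y - z); rewrite addrA subrK. Qed.

Lemma continuous_eucl_norm : continuous en.
Proof.
move=> x; apply: (@continuous_comp _ _ _ (fun y => \sum_i y ord0 i ^+ 2) Num.sqrt);
  last exact: sqrt_continuous.
apply: (@continuous_big _ _ +%R 0 xpredT add_continuous) => // i _ y.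
exact: (@continuous_comp _ _ _ (fun y => y ord0 i) (fun r => r ^+ 2))
  (@coord_continuous _ _ _ _ _ _) (@exprn_continuous _ _ _).
Qed.

Lemma continuous_eucl_dist q : continuous (fun y => en (y - q)).
Proof.
move=> y; apply: (@continuous_comp _ _ _ (fun y => y - q) en);
  [exact: cvgB cvg_id (cvg_cst q) | exact: continuous_eucl_norm].
Qed.

Lemma closed_eucl_ball q r : closed (eucl_ball q r).
Proof.
exact: (@preimage_closed _ _ (fun y => en (y - q)) [set s | s <= r]
  (fun y _ => @continuous_eucl_dist q y) (@closed_le _ r)).
Qed.

Lemma closed_eucl_far q r : closed [set y | r <= en (y - q)].
Proof.
exact: (@preimage_closed _ _ (fun y => en (y - q)) [set s | r <= s]
  (fun y _ => @continuous_eucl_dist q y) (@closed_ge _ r)).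
Qed.

Lemma open_eucl_far q r : open [set y | r < en (y - q)].
Proof.
exact: (@open_comp _ _ (fun y => en (y - q)) [set s | r < s]
  (fun y _ => @continuous_eucl_dist q y) (@open_gt _ r)).
Qed.

Lemma open_eucl_near q r : open [set y | en (y - q) < r].
Proof.
exact: (@open_comp _ _ (fun y => en (y - q)) [set s | s < r]
  (fun y _ => @continuous_eucl_dist q y) (@open_lt _ r)).
Qed.

End EuclideanNorm.

Section BorelSets.
Variables (R : realType) (D : nat).
Implicit Types (A U : set 'rV[R]_D) (x : 'rV[R]_D) (r : R).

Lemma borelD_open U : open U -> borelD U.
Proof. exact: sub_gen_smallest. Qed.

Lemma borelD_setC A : borelD A -> borelD (~` A).
Proof.
have [_ setC_closed _] := smallest_sigma_algebra setT [set U : set 'rV[R]_D | open U].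
by move=> bA; rewrite -setTD; exact: setC_closed.
Qed.

Lemma borelD_closed A : closed A -> borelD A.
Proof.
by move=> cA; rewrite -(setCK A); apply: borelD_setC; apply: borelD_open; exact: closed_openC.
Qed.

Lemma borelD_bigcup (F : nat -> set 'rV[R]_D) :
  (forall k, borelD (F k)) -> borelD (\bigcup_k F k).
Proof.
have [_ _ bigcup_closed] := smallest_sigma_algebra setT [set U : set 'rV[R]_D | open U].
exact: bigcup_closed.
Qed.

Lemma borelD_eucl_ball x r : borelD (eucl_ball x r).
Proof. by apply: borelD_closed; exact: closed_eucl_ball. Qed.

End BorelSets.

Lemma measure_bigsetU_le d (T : measurableType d) (R : realType)
    (mu : {measure set T -> \bar R}) (I : Type) (s : seq I) (F : I -> set T) :
  (forall i, measurable (F i)) ->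
  (mu (\big[setU/set0]_(i <- s) F i) <= \sum_(i <- s) mu (F i))%E.
Proof.
move=> mF; elim: s => [|i s IH]; first by rewrite !big_nil measure0.
rewrite !big_cons; apply: le_trans (measureU2 _ _ _) _ => //.
  exact: bigsetU_measurable.
exact: leeD2l.
Qed.

Section EuclideanDistance.
Variables (R : realType) (D : nat).
Local Notation en := (@eucl_norm R D).
Implicit Types (M S : set 'rV[R]_D) (t : R).

Lemma eucl_dist_gtP (b : 'rV[R]_D) S t :
  (t%:E < eucl_dist b S)%E <->
  exists2 dl, 0 < dl & forall a, S a -> t + dl <= en (b - a).
Proof.
split=> [t_lt|[dl dl_gt0 far]]; last first.
  apply: (@lt_le_trans _ _ (t + dl)%:E); first by rewrite lte_fin ltrDl.
  by apply/ereal_infP => _ [a Sa <-]; rewrite lee_fin; exact: far.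
have [s ts s_le] : exists2 s, t < s & (s%:E <= eucl_dist b S)%E.
  move: t_lt; case: (eucl_dist b S) => [r| |] //=; first by rewrite lte_fin; exists r.
  by exists (t + 1); [rewrite ltrDl | rewrite leey].
exists (s - t); first by rewrite subr_gt0.
move=> a Sa; rewrite addrC subrK -lee_fin; apply: le_trans s_le _.
by apply: ereal_inf_lbound; exists a.
Qed.

Definition eucl_far_compact M t (k : nat) : set 'rV[R]_D :=
  eucl_ball 0 k%:R `&` \bigcap_(a in M) [set y | t + k.+1%:R^-1 <= en (y - a)].

Lemma eucl_far_bigcup M t :
  [set y | t%:E < eucl_dist y M]%E = \bigcup_k eucl_far_compact M t k.
Proof.
apply/seteqP; split=> y /=; last first.
  by case=> k _ [_ far]; apply/eucl_dist_gtP; exists k.+1%:R^-1 => //; rewrite invr_gt0.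
move=> /eucl_dist_gtP[dl dl_gt0 far].
have y_ge0 : 0 <= Num.max (en (y - 0)) dl^-1 by rewrite le_max eucl_norm_ge0.
pose k := Num.Def.archi_bound (Num.max (en (y - 0)) dl^-1).
have := archi_boundP y_ge0; rewrite -/k gt_max => /andP[y_lt dl_lt].
exists k => //; split; first exact: ltW.
move=> a Ma /=; apply: le_trans (far a Ma); rewrite lerD2l.
rewrite -[leRHS]invrK lef_pV2 ?posrE ?invr_gt0 ?ltr0Sn //.
by apply: ltW (lt_trans dl_lt _); rewrite ltr_nat.
Qed.

Lemma closed_eucl_far_compact M t k : closed (eucl_far_compact M t k).
Proof.
apply: closedI; first exact: closed_eucl_ball.
by apply: closed_bigI => a _; exact: closed_eucl_far.
Qed.

Lemma compact_eucl_far_compact M t k : compact (eucl_far_compact M t k).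
Proof.
apply: bounded_closed_compact; last exact: closed_eucl_far_compact.
rewrite /bounded_set /bounded_near.
near=> r => y [/= y_le _]; rewrite -[y]subr0.
apply: le_trans (normr_le_eucl_norm _) _; apply: le_trans y_le _.
by near: r; apply: nbhs_pinfty_ge; exact: num_real.
Unshelve. all: by end_near. Qed.

Lemma eucl_far_compact_disjoint M t k :
  0 <= t -> eucl_far_compact M t k `&` M = set0.
Proof.
move=> t_ge0; rewrite -subset0 => a [[_ far] Ma].
have /= := far a Ma; rewrite subrr eucl_norm0 leNgt => /negP; apply.
by rewrite ltr_wpDl // invr_gt0.
Qed.

Lemma borelD_eucl_far M t : borelD [set y | t%:E < eucl_dist y M]%E.
Proof.
rewrite eucl_far_bigcup; apply: borelD_bigcup => k.
by apply: borelD_closed; exact: closed_eucl_far_compact.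
Qed.

End EuclideanDistance.

Section LawSupport.
Variables (R : realType) (D : nat) (dO : measure_display) (Omega : measurableType dO).
Variables (Prob : probability Omega R) (Y : Omega -> 'rV[R]_D).
Hypothesis mY : forall A, borelD A -> measurable (Y @^-1` A).
Local Notation law := (fun A : set 'rV[R]_D => Prob (Y @^-1` A)).

Lemma compact_disjoint_support_null (K : set 'rV[R]_D) :
  compact K -> K `&` prob_support law = set0 -> Prob (Y @^-1` K) = 0%E.
Proof.
move=> cK K_supp.
have null_nbhs y : exists U : set 'rV[R]_D,
    open U /\ (K y -> U y /\ Prob (Y @^-1` U) = 0%E).
  have [Ky|nKy] := pselect (K y); last by exists set0; split; [exact: open0 | move=> /nKy].
  have : ~ prob_support law y.
    by move=> Sy; have : (K `&` prob_support law) y by []; rewrite K_supp.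
  move=> /existsNP[U /not_implyP[oU /not_implyP[Uy /negP]]].
  by rewrite -leNgt measure_le0 => /eqP U0; exists U.
have /choice[U HU] := null_nbhs.
have mU y : measurable (Y @^-1` U y) by apply: mY; apply: borelD_open; exact: (HU y).1.
move: (cK); rewrite compact_cover => /(_ _ K U) [].
- by move=> y _; exact: (HU y).1.
- by move=> y Ky; exists y => //; exact: ((HU y).2 Ky).1.
move=> F FK KF.
apply/eqP; rewrite -measure_le0.
apply: (@le_trans _ _ (Prob (\big[setU/set0]_(y <- finmap.enum_fset F) Y @^-1` U y))).
  apply: le_measure; rewrite ?inE.
  - by apply: mY; apply: borelD_closed; exact: compact_closed (@norm_hausdorff _ _) cK.
  - exact: bigsetU_measurable.
  by move=> w /KF[y Fy Uy]; rewrite -bigcup_seq; exists y.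
apply: le_trans (measure_bigsetU_le _ _ mU) _.
by rewrite big_seq big1 // => y /FK; rewrite in_setE => Ky; exact: ((HU y).2 Ky).2.
Qed.

Lemma far_from_support_null (M : set 'rV[R]_D) (t : R) :
  0 <= t -> M = prob_support law ->
  Prob (Y @^-1` [set y | t%:E < eucl_dist y M]%E) = 0%E.
Proof.
move=> t_ge0 M_supp; apply/eqP; rewrite -measure_le0.
have mK k : measurable (Y @^-1` eucl_far_compact M t k).
  by apply: mY; apply: borelD_closed; exact: closed_eucl_far_compact.
apply: le_trans (measure_sigma_subadditive _ mK (mY (borelD_eucl_far M t)) _) _.
  by rewrite eucl_far_bigcup preimage_bigcup.
rewrite eseries0 // => k _ _; apply: compact_disjoint_support_null.
  exact: compact_eucl_far_compact.
by rewrite -M_supp; exact: eucl_far_compact_disjoint.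
Qed.

End LawSupport.

Lemma eucl_net (R : realType) (D : nat) (M : set 'rV[R]_D) (eps : R) :
  compact M -> 0 < eps -> exists Q : seq 'rV[R]_D, (forall q, q \in Q -> M q) /\
    (forall p, M p -> exists2 q, q \in Q & eucl_norm (p - q) < eps).
Proof.
rewrite compact_cover => /(_ _ M (fun q => [set y | eucl_norm (y - q) < eps])) cover eps_gt0.
case: cover => [q _|p Mp|F FM MF]; first exact: open_eucl_near.
  by exists p => //=; rewrite subrr eucl_norm0.
exists (finmap.enum_fset F); split; last by move=> p /MF[q Fq pq]; exists q.
by move=> q /FM; rewrite in_setE.
Qed.

Section Packing.
Variables (R : realType) (D : nat) (dO : measure_display) (Omega : measurableType dO).
Variables (Prob : probability Omega R) (Y : Omega -> 'rV[R]_D).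
Variables (M : set 'rV[R]_D) (r c : R).
Hypothesis mY : forall A, borelD A -> measurable (Y @^-1` A).
Hypothesis ball_mass_ge : forall x, M x -> (c%:E <= Prob (Y @^-1` eucl_ball x (r / 2)))%E.
Local Notation en := (@eucl_norm R D).

Let mball q : measurable (Y @^-1` eucl_ball q (r / 2)).
Proof. by apply: mY; exact: borelD_eucl_ball. Qed.

Definition separated (L : seq 'rV[R]_D) :=
  pairwise (fun p q => r < en (p - q)) L /\ forall q, q \in L -> M q.

Lemma separated_mass_ge L : separated L ->
  (((size L)%:R * c)%:E <= Prob (\big[setU/set0]_(q <- L) Y @^-1` eucl_ball q (r / 2)))%E.
Proof.
elim: L => [|p L IH] [/=]; first by rewrite big_nil mul0r measure0.
rewrite big_cons => /andP[far_p sepL] LM.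
have disj : Y @^-1` eucl_ball p (r / 2) `&`
    \big[setU/set0]_(q <- L) Y @^-1` eucl_ball q (r / 2) = set0.
  rewrite -subset0 => w [/= Bp]; rewrite -bigcup_seq => -[q /= Lq Bq].
  have := allP far_p q Lq; apply/negP; rewrite -leNgt.
  apply: le_trans (ler_eucl_dist_triangle p (Y w) q) _.
  by rewrite eucl_distC [leRHS](splitr r) lerD.
rewrite measureU //; last exact: bigsetU_measurable.
rewrite -addn1 natrD mulrDl mul1r EFinD addeC leeD //.
  by apply: ball_mass_ge; apply: LM; exact: mem_head.
by apply: IH; split => // q Lq; apply: LM; rewrite inE Lq orbT.
Qed.

Lemma separated_size_le L : separated L -> (size L)%:R * c <= 1.
Proof.
move=> /separated_mass_ge mass; rewrite -lee_fin; apply: le_trans mass _.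
by apply: probability_le1; exact: bigsetU_measurable.
Qed.

Lemma packing_cover : 0 < c -> exists L : seq 'rV[R]_D,
  [/\ (size L)%:R * c <= 1, forall q, q \in L -> M q &
       forall p, M p -> exists2 q, q \in L & en (p - q) <= r].
Proof.
move=> c_gt0; pose has_sep m := `[< exists L, separated L /\ size L = m >].
have has_sep0 : exists m, has_sep m by exists 0%N; apply/asboolP; exists [::].
have has_sep_le m : has_sep m -> (m <= Num.Def.archi_bound c^-1)%N.
  move=> /asboolP[L [sepL <-]]; apply: ltnW; rewrite -(ltr_nat R).
  have c_inv_ge0 : 0 <= c^-1 by rewrite invr_ge0 ltW.
  apply: le_lt_trans _ (archi_boundP c_inv_ge0).
  by rewrite -[c^-1]mul1r ler_pdivlMr // separated_size_le.
case: (ex_maxnP has_sep0 has_sep_le) => m /asboolP[L [sepL <-]] maxL.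
exists L; split; [exact: separated_size_le | by case: sepL |].
move=> p Mp; apply: contrapT => far_p.
have sep_pL : separated (p :: L).
  case: sepL => sepL LM; split => [|q]; last by rewrite inE => /orP[/eqP -> //|]; exact: LM.
  rewrite /= sepL andbT; apply/allP => q Lq; rewrite ltNge; apply/negP => pq.
  by apply: far_p; exists q.
by have := maxL _ (asboolT (ex_intro _ _ (conj sep_pL erefl))); rewrite ltnn.
Qed.

End Packing.

Lemma exprn_onem_le_expR (R : realType) (p : R) n :
  p <= 1 -> (1 - p) ^+ n <= expR (- (n%:R * p)).
Proof.
move=> p_le1; rewrite -mulrN expRM_natl.
by rewrite lerXn2r ?nnegrE ?subr_ge0 ?expR_ge0 //; exact: expR_ge1Dx.
Qed.

Lemma exists_natSinv_lt (R : archiRealFieldType) (e : R) :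
  0 < e -> exists k : nat, k.+1%:R^-1 < e.
Proof.
move=> e_gt0; have e_inv_ge0 : 0 <= e^-1 by rewrite invr_ge0 ltW.
exists (Num.Def.archi_bound e^-1).
rewrite -[ltRHS]invrK ltf_pV2 ?posrE ?invr_gt0 ?ltr0Sn //.
by apply: lt_trans (archi_boundP e_inv_ge0) _; rewrite ltr_nat.
Qed.

Lemma hausdorff_distance_gtP (R : realType) (D : nat) (S M : set 'rV[R]_D) (t : R) :
  (t%:E < hausdorff_distance S M)%E <->
  (exists2 s, S s & t%:E < eucl_dist s M)%E \/ (exists2 b, M b & t%:E < eucl_dist b S)%E.
Proof.
rewrite /hausdorff_distance lt_max; split.
  by case/orP => /ereal_sup_gtP[_ [x Sx <-] t_lt]; [left | right]; exists x.
case=> -[x Sx t_lt]; apply/orP; [left | right]; apply/ereal_sup_gtP.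
  by exists (eucl_dist x M) => //; exists x.
by exists (eucl_dist x S) => //; exists x.
Qed.

Section Sample.
Variables (R : realType) (D : nat) (dO : measure_display) (Omega : measurableType dO).
Variables (Prob : probability Omega R) (X : nat -> Omega -> 'rV[R]_D) (n : nat).
Hypothesis mX : forall i A, borelD A -> measurable (X i @^-1` A).
Hypothesis X_ident : forall i A, borelD A -> Prob (X i @^-1` A) = Prob (X 0%N @^-1` A).
Hypothesis X_indep : forall (m : nat) (A : 'I_m -> set 'rV[R]_D), (forall i, borelD (A i)) ->
  Prob (\bigcap_(i in [set: 'I_m]) (X i @^-1` A i)) = (\prod_(i < m) Prob (X i @^-1` A i))%E.
Local Notation en := (@eucl_norm R D).
Local Notation sample w := [set X i w | i in [set i | (i < n)%N]].
Implicit Types (M B : set 'rV[R]_D) (t : R).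

Definition sample_avoids B : set Omega :=
  \bigcap_(i in [set i | (i < n)%N]) X i @^-1` (~` B).

Definition sample_misses M t : set Omega :=
  [set w | exists2 b, M b & t%:E < eucl_dist b (sample w)]%E.

Lemma measurable_sample_avoids B : borelD B -> measurable (sample_avoids B).
Proof. by move=> bB; apply: bigcap_measurableType => i _; apply: mX; exact: borelD_setC. Qed.

Lemma hausdorff_sampleE M t :
  [set w | t%:E < hausdorff_distance (sample w) M]%E =
  \big[setU/set0]_(i <- iota 0 n) X i @^-1` [set y | t%:E < eucl_dist y M]%E
  `|` sample_misses M t.
Proof.
rewrite -bigcup_seq; apply/seteqP; split=> w /=.
  case/hausdorff_distance_gtP => [[_ [i i_lt <-] far]|]; last by right.
  by left; exists i; rewrite //= mem_iota.
case=> [[i /= i_lt far]|miss]; apply/hausdorff_distance_gtP; last by right.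
by left; exists (X i w) => //; exists i => //=; move: i_lt; rewrite mem_iota.
Qed.

Lemma measurable_sample_misses M t : compact M -> measurable (sample_misses M t).
Proof.
move=> cM; have invSn_gt0 k : 0 < k.+1%:R^-1 :> R by rewrite invr_gt0.
have /choice[Q HQ] k := eucl_net cM (invSn_gt0 k).
pose near_miss k := \big[setU/set0]_(q <- Q k) \bigcap_(i in [set i | (i < n)%N])
  X i @^-1` [set y | t + k.+1%:R^-1 < en (y - q)].
suff -> : sample_misses M t = \bigcup_k near_miss k.
  apply: bigcupT_measurable => k; apply: bigsetU_measurable => q _.
  apply: bigcap_measurableType => i _; apply: mX; apply: borelD_open.
  exact: open_eucl_far.
apply/seteqP; split=> w.
- move=> [b Mb /eucl_dist_gtP[dl dl_gt0 far]].
  have [k k_lt] := exists_natSinv_lt (divr_gt0 dl_gt0 (ltr0n R 2)).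
  have [q Qq bq] := (HQ k).2 b Mb.
  exists k => //; rewrite /near_miss -bigcup_seq; exists q => // i i_lt /=.
  have := far (X i w) (ex_intro2 _ _ i i_lt erefl).
  have := ler_eucl_dist_triangle b q (X i w); rewrite (eucl_distC q).
  move: bq k_lt; set e := k.+1%:R^-1.
  by set u := en (b - X i w); set v := en (b - q); set z := en (X i w - q); lra.
- move=> [k _]; rewrite /near_miss -bigcup_seq => -[q /= Qq far].
  exists q; first exact: (HQ k).1.
  apply/eucl_dist_gtP; exists k.+1%:R^-1 => //.
  by move=> _ [i i_lt <-]; rewrite eucl_distC; exact: ltW (far i i_lt).
Qed.

Lemma sample_misses_sub_avoids M (L : seq 'rV[R]_D) (r s t : R) : r + s <= t ->
  (forall b, M b -> exists2 q, q \in L & en (b - q) <= r) ->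
  sample_misses M t `<=` \big[setU/set0]_(q <- L) sample_avoids (eucl_ball q s).
Proof.
move=> rst cover w [b Mb /eucl_dist_gtP[dl dl_gt0 far]].
have [q Lq bq] := cover b Mb.
rewrite -bigcup_seq; exists q => // i i_lt /=; rewrite /eucl_ball /= => near_q.
have := far (X i w) (ex_intro2 _ _ i i_lt erefl).
have := ler_eucl_dist_triangle b q (X i w); rewrite (eucl_distC q).
move: bq near_q.
by set u := en (b - X i w); set v := en (b - q); set z := en (X i w - q); lra.
Qed.

Lemma prob_sample_avoids B : borelD B ->
  Prob (sample_avoids B) = ((1 - fine (Prob (X 0%N @^-1` B))) ^+ n)%:E.
Proof.
move=> bB.
have -> : sample_avoids B = \bigcap_(i in [set: 'I_n]) X i @^-1` ~` B.
  apply/seteqP; split=> w avoid i /=; first by move=> _; apply: avoid; exact: ltn_ord.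
  by move=> i_lt; exact: (avoid (Ordinal i_lt)).
rewrite X_indep => [|_]; last exact: borelD_setC.
have prob_compl i : Prob (X i @^-1` ~` B) = (1 - fine (Prob (X 0%N @^-1` B)))%:E.
  rewrite preimage_setC probability_setC; last exact: mX.
  by rewrite X_ident // EFinB fineK // fin_num_measure //; exact: mX.
under eq_bigr => i _ do rewrite prob_compl.
by rewrite prodEFin prodr_const card_ord.
Qed.

Lemma prob_sample_misses_le M t a b :
  compact M -> 0 < t -> 0 < a ->
  (forall x, M x -> a <= fine (Prob (X 0%N @^-1` eucl_ball x (t / 2 / 2)))) ->
  (forall x, M x -> b <= fine (Prob (X 0%N @^-1` eucl_ball x (t / 2)))) ->
  (Prob (sample_misses M t) <= (expR (- (n%:R * b)) / a)%:E)%E.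
Proof.
move=> cM t_gt0 a_gt0 mass_quarter mass_half.
have mball x s : measurable (X 0%N @^-1` eucl_ball x s).
  by apply: mX; exact: borelD_eucl_ball.
have mass_quarterE x : M x -> (a%:E <= Prob (X 0%N @^-1` eucl_ball x (t / 2 / 2)))%E.
  by move=> Mx; rewrite -[Prob _]fineK ?fin_num_measure // lee_fin mass_quarter.
have [L [L_size LM L_cover]] := packing_cover (mX 0) mass_quarterE a_gt0.
have avoid_le q : q \in L ->
    (Prob (sample_avoids (eucl_ball q (t / 2))) <= (expR (- (n%:R * b)))%:E)%E.
  move=> Lq; rewrite prob_sample_avoids ?lee_fin; last exact: borelD_eucl_ball.
  apply: le_trans (exprn_onem_le_expR _ _) _.
    by rewrite -lee_fin fineK ?fin_num_measure //; exact: probability_le1.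
  rewrite ler_expR lerN2; apply: ler_wpM2l => //; apply: mass_half; exact: LM.
have half_le : t / 2 + t / 2 <= t by rewrite -splitr.
apply: le_trans (le_measure Prob _ _ (sample_misses_sub_avoids half_le L_cover)) _.
- by rewrite inE; exact: measurable_sample_misses.
- rewrite inE; apply: bigsetU_measurable => q _.
  by apply: measurable_sample_avoids; exact: borelD_eucl_ball.
apply: le_trans (measure_bigsetU_le _ _ _) _.
  by move=> q; apply: measurable_sample_avoids; exact: borelD_eucl_ball.
rewrite big_seq; apply: le_trans (lee_sum L avoid_le) _.
rewrite -big_seq sumEFin lee_fin big_const_seq count_predT iter_addr_0.
rewrite -[_ *+ size L]mulr_natr.
by rewrite ler_pM2l ?expR_gt0 // -[a^-1]mul1r ler_pdivlMr.
Qed.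

Lemma prob_far_sample_null M t :
  0 <= t -> M = prob_support (fun A => Prob (X 0%N @^-1` A)) ->
  Prob (\big[setU/set0]_(i <- iota 0 n) X i @^-1` [set y | t%:E < eucl_dist y M]%E) = 0%E.
Proof.
move=> t_ge0 M_supp; apply/eqP; rewrite -measure_le0.
apply: le_trans (measure_bigsetU_le _ _ _) _.
  by move=> i; apply: mX; exact: borelD_eucl_far.
rewrite big1 ?lexx // => i _.
apply: etrans (X_ident _ (borelD_eucl_far _ _)) _.
exact (far_from_support_null (mX 0) t_ge0 M_supp).
Qed.

Lemma hausdorff_sample_tail M t a b :
  M = prob_support (fun A => Prob (X 0%N @^-1` A)) -> compact M -> 0 < t -> 0 < a ->
  (forall x, M x -> a <= fine (Prob (X 0%N @^-1` eucl_ball x (t / 2 / 2)))) ->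
  (forall x, M x -> b <= fine (Prob (X 0%N @^-1` eucl_ball x (t / 2)))) ->
  (Prob [set w | t%:E < hausdorff_distance (sample w) M]%E <=
     (expR (- (n%:R * b)) / a)%:E)%E.
Proof.
move=> M_supp cM t_gt0 a_gt0 mass_quarter mass_half; rewrite hausdorff_sampleE.
apply: le_trans (measureU2 _ _ _) _.
- by apply: bigsetU_measurable => i _; apply: mX; exact: borelD_eucl_far.
- exact: measurable_sample_misses.
(* [rewrite] cannot see [Prob] through the content structure used by [measureU2]. *)
have /eqP := prob_far_sample_null (ltW t_gt0) M_supp; rewrite eq_le => /andP[far_le0 _].
have misses_le := prob_sample_misses_le cM t_gt0 a_gt0 mass_quarter mass_half.
rewrite -[leRHS]add0e; apply: leeD; [exact far_le0 | exact misses_le].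
Qed.

End Sample.

Lemma bounded_derive_lower_bound (R : realType) (g : R -> R) (l C t0 : R) :
  g t @[t --> 0^'+] --> l ->
  (forall t, 0 < t < t0 -> derivable g t 1 /\ `|derive1 g t| <= C) ->
  forall s, 0 < s < t0 -> l - C * s <= g s.
Proof.
move=> g_cvg dg s /andP[s_gt0 s_lt].
have in_dom x : 0 < x -> x <= s -> 0 < x < t0.
  by move=> x_gt0 x_le; rewrite x_gt0 (le_lt_trans x_le s_lt).
have C_ge0 : 0 <= C.
  by have [_] := dg s (in_dom s s_gt0 (lexx s)); apply: le_trans.
have slope e : 0 < e -> e < s -> g e <= g s + C * s.
  move=> e_gt0 e_lt.
  have dom x : e <= x -> x <= s -> 0 < x < t0.
    by move=> ex xs; exact: in_dom (lt_le_trans e_gt0 ex) xs.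
  have [c ces mvt] : exists2 c, c \in `]e, s[ & g s - g e = derive1 g c * (s - e).
    apply: MVT e_lt _ _ => [x|].
      rewrite in_itv => /andP[ex xs]; rewrite derive1E; apply: derivableP.
      exact: (dg x (dom x (ltW ex) (ltW xs))).1.
    apply: derivable_within_continuous => x; rewrite in_itv => /andP[ex xs].
    exact: (dg x (dom x ex xs)).1.
  move: ces; rewrite in_itv => /andP[ec cs].
  have [_ dgc] := dg c (dom c (ltW ec) (ltW cs)).
  have : - derive1 g c <= C by apply: le_trans dgc; rewrite -normrN ler_norm.
  have : 0 <= s - e by rewrite subr_ge0 ltW.
  by move: mvt; set a := derive1 g c; nra.
have : l <= g s + C * s.
  apply: (@closed_cvg _ _ _ _ g [set x | x <= g s + C * s] (@closed_le _ _) _ l g_cvg).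
  by near=> e; apply: slope; near: e; [exact: nbhs_right_gt | exact: nbhs_right_lt].
lra.
Unshelve. all: end_near. Qed.

Lemma inf_image_divr_le (R : realType) (T : Type) (A : set T) (f : T -> R) (u : R) x :
  0 < u -> (forall y, A y -> 0 <= f y) -> A x -> inf [set f y / u | y in A] * u <= f x.
Proof.
move=> u_gt0 f_ge0 Ax; rewrite -ler_pdivlMr //; apply: ge_inf; last by exists x.
by exists 0 => _ [y Ay <-]; apply: divr_ge0; [exact: f_ge0 | exact: ltW].
Qed.

Theorem mainTheorem2 (R : realType) (D d : nat)
  (dO : measure_display) (Omega : measurableType dO)
  (Prob : probability Omega R)
  (X : nat -> Omega -> 'rV[R]_D)
  (M : set 'rV[R]_D)
  (rho t0 C2 : R) :
  (* the X_i are random vectors *)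
  (forall i A, borelD A -> measurable (X i @^-1` A)) ->
  (* identically distributed *)
  (forall i A, borelD A -> Prob (X i @^-1` A) = Prob (X 0%N @^-1` A)) ->
  (* mutually independent *)
  (forall (n : nat) (A : 'I_n -> set 'rV[R]_D), (forall i, borelD (A i)) ->
     Prob (\bigcap_(i in [set: 'I_n]) (X i @^-1` A i)) =
     (\prod_(i < n) Prob (X i @^-1` A i))%E) ->
  (* common law P, with prob_support M *)
  let P := fun A : set 'rV[R]_D => Prob (X 0%N @^-1` A) in
  M = prob_support P ->
  compact M ->
  smooth_submanifold d M ->
  positive_reach M ->
  let rho_xt := fun (x : 'rV[R]_D) (t : R) => fine (P (eucl_ball x (t / 2))) / t ^+ d in
  let rho_t := fun t : R => inf [set rho_xt x t | x in M] in
  rho_t t @[t --> 0^'+] --> rho ->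
  0 < rho ->
  0 < t0 ->
  let g := fun t : R => if t == 0 then rho else rho_t t in
  (* g differentiable on [0, t0] with |g'| <= C2 there *)
  (exists2 l : R, `|l| <= C2 & (fun h => h^-1 * (g h - g 0)) h @[h --> 0^'+] --> l) ->
  (forall t, 0 < t < t0 -> derivable g t 1 /\ `|derive1 g t| <= C2) ->
  (exists2 l : R, `|l| <= C2 &
      (fun h => h^-1 * (g (t0 + h) - g t0)) h @[h --> 0^'-] --> l) ->
  forall (n : nat) (t : R), (1 <= n)%N ->
    0 < t -> 2 * C2 * t < rho -> t < t0 ->
    (Prob [set w | (hausdorff_distance [set X i w | i in [set i | (i < n)%N]] M > t%:E)%E]
      <= ((2 ^+ d.+1 / (rho * t ^+ d)) * expR (- (n%:R * rho * t ^+ d) / 2))%:E)%E.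
Proof.
move=> mX X_ident X_indep P M_supp cM _ _ rho_xt rho_t rho_cvg rho_gt0 _ g _ dg _
  n t _ t_gt0 tC2 t_lt_t0.
have g_cvg : g s @[s --> 0^'+] --> rho.
  apply: cvg_trans rho_cvg; apply: near_eq_cvg; near=> s.
  by rewrite /g gt_eqF //; near: s; exact: nbhs_right_gt.
have mass s : 0 < s <= t -> forall x, M x ->
    rho / 2 * s ^+ d <= fine (P (eucl_ball x (s / 2))).
  move=> /andP[s_gt0 s_le] x Mx.
  have s_dom : 0 < s < t0 by rewrite s_gt0 (le_lt_trans s_le t_lt_t0).
  have C2_ge0 : 0 <= C2 by have [_] := dg s s_dom; apply: le_trans.
  have : rho / 2 <= rho_t s.
    by have := bounded_derive_lower_bound g_cvg dg s_dom; rewrite /g gt_eqF //; nra.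
  move=> /(ler_wpM2r (exprn_ge0 d (ltW s_gt0)))/le_trans; apply.
  apply: (inf_image_divr_le (f := fun y => fine (P (eucl_ball y (s / 2))))) => //.
    exact: exprn_gt0.
  by move=> y _; apply/fine_ge0/measure_ge0.
have t_half : 0 < t / 2 <= t by apply/andP; split; lra.
have t_full : 0 < t <= t by rewrite t_gt0 lexx.
have a_gt0 : 0 < rho / 2 * (t / 2) ^+ d by apply: mulr_gt0; [lra | apply: exprn_gt0; lra].
apply: le_trans (hausdorff_sample_tail n mX X_ident X_indep M_supp cM t_gt0 a_gt0
  (mass _ t_half) (mass _ t_full)) _.
rewrite lee_fin le_eqVlt; apply/orP; left; apply/eqP.
rewrite mulrC expr_div_n exprS; congr (_ * _); last by congr (expR _); ring.
by field; rewrite !expf_neq0 ?lt0r_neq0.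
Unshelve. all: by end_near. Qed.
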